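(* Let $T$ be an $\mathcal O$-operator on a Lie algebra $\mathfrak g$ with respect to a representation $(V;\rho)$ and let $T_t=\sum_{i=0}^n\tau_it^i$ be an order $n$ deformation of $T$. Define $\mathrm{Ob}\in\mathrm{Hom}(\wedge^2V,\mathfrak g)$ by $$\mathrm{Ob}(u,v)=\sum_{i+j=n+1,\ i,j\ge1}\Big([\tau_i(u),\tau_j(v)]-\tau_i\big(\rho(\tau_j(u))(v)-\rho(\tau_j(v))(u)\big)\Big).$$ Then $\mathrm{Ob}$ is a $2$-cocycle, i.e. $d_{\bar\rho}\mathrm{Ob}=0$.
   Context: An $\mathcal O$-operator: linear $T:V\to\mathfrak g$ with $[Tu,Tv]=T(\rho(Tu)(v)-\rho(Tv)(u))$. An order $n$ deformation of $T$ is $T_t=\sum_{i=0}^n\tau_it^i$ with $\tau_0=T$, $\tau_i\in\mathrm{Hom}(V,\mathfrak g)$, such that $[T_t(u),T_t(v)]=T_t(\rho(T_t(u))(v)-\rho(T_t(v))(u))$ in $\mathfrak g[[t]]/(t^{n+1})$, equivalently $\sum_{k+l=i,\,k,l\ge0}([\tau_ku,\tau_lv]-\tau_k(\rho(\tau_lu)(v)-\rho(\tau_lv)(u)))=0$ for $0\le i\le n$. With $[u,v]_T=\rho(Tu)(v)-\rho(Tv)(u)$, the coboundary $d_{\bar\rho}:\mathrm{Hom}(\wedge^kV,\mathfrak g)\to\mathrm{Hom}(\wedge^{k+1}V,\mathfrak g)$ is $d_{\bar\rho}f(u_1,\dots,u_{k+1})=\sum_{i}(-1)^{i+1}[Tu_i,f(\dots,\hat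 u_i,\dots)]+\sum_i(-1)^{i+1}T\rho(f(\dots,\hat u_i,\dots))(u_i)+\sum_{i<j}(-1)^{i+j}f([u_i,u_j]_T,u_1,\dots,\hat u_i,\dots,\hat u_j,\dots,u_{k+1})$. *)

From HB Require Import structures.
From mathcomp Require Import all_boot all_order all_algebra.
Set Implicit Arguments. Unset Strict Implicit. Unset Printing Implicit Defensive.
Import GRing.Theory.
Local Open Scope ring_scope.

Section Defs.
Variable K : fieldType.

Definition is_lie_bracket (g : lmodType K) (br : g -> g -> g) : Prop :=
  [/\ (forall (a : K) x y z, br (a *: x + y) z = a *: br x z + br y z),
      (forall (a : K) x y z, br z (a *: x + y) = a *: br z x + br z y),
      (forall x, br x x = 0) &
      (forall x y z, br x (br y z) + br y (br z x) + br z (br x y) = 0)].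

Definition is_representation (g V : lmodType K) (br : g -> g -> g)
    (rho : g -> V -> V) : Prop :=
  [/\ (forall (a : K) x y v, rho (a *: x + y) v = a *: rho x v + rho y v),
      (forall (a : K) x u v, rho x (a *: u + v) = a *: rho x u + rho x v) &
      (forall x y v, rho (br x y) v = rho x (rho y v) - rho y (rho x v))].

Variables (g V : lmodType K) (br : g -> g -> g) (rho : g -> V -> V).

Definition is_O_operator (T : {linear V -> g}) : Prop :=
  forall u v, br (T u) (T v) = T (rho (T u) v - rho (T v) u).

(* order n deformation T_t = sum_{i=0}^n tau_i t^i of T (only tau_0..tau_n matter) *)
Definition is_order_deformation (T : {linear V -> g}) (n : nat)
    (tau : nat -> {linear V -> g}) : Prop :=
  (forall u, tau 0%N u = T u) /\
  forall i : nat, (i <= n)%N -> forall u v,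
    \sum_(k < i.+1) (br (tau k u) (tau (i - k)%N v)
        - tau k (rho (tau (i - k)%N u) v - rho (tau (i - k)%N v) u)) = 0.

Definition bracketT (T : {linear V -> g}) (u v : V) : V :=
  rho (T u) v - rho (T v) u.

(* k-cochains: maps V^k -> g (elements of Hom(wedge^k V, g) when
   multilinear and alternating). *)
Definition cochain (k : nat) := ('I_k -> V) -> g.

(* coboundary d_{\bar rho} : C^{k+1} -> C^{k+2}, with 0-based indices
   (so (-1)^(i+1) in 1-based indexing becomes (-1)^i). *)
Definition dbar (T : {linear V -> g}) (k : nat) (f : cochain k.+1)
    : cochain k.+2 :=
  fun u =>
    \sum_(i < k.+2) (-1) ^+ i *: br (T (u i)) (f (fun m => u (lift i m)))
  + \sum_(i < k.+2) (-1) ^+ i *: T (rho (f (fun m => u (lift i m))) (u i))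
  + \sum_(i < k.+2) \sum_(j < k.+2 | (i < j)%N)
      (-1) ^+ (i + j) *:
        f (fun m : 'I_k.+1 =>
             match unlift ord0 m with
             | None => bracketT T (u i) (u j)
             | Some m' => u (lift j (lift (inord i) m'))
             end).

Definition Ob (n : nat) (tau : nat -> {linear V -> g}) (u v : V) : g :=
  \sum_(1 <= i < n.+1)
    (br (tau i u) (tau (n.+1 - i)%N v)
     - tau i (rho (tau (n.+1 - i)%N u) v - rho (tau (n.+1 - i)%N v) u)).

Definition Ob_cochain (n : nat) (tau : nat -> {linear V -> g}) : cochain 2 :=
  fun u => Ob n tau (u ord0) (u ord_max).

End Defs.

From mathcomp Require Import all_boot all_order all_algebra zify.
Set Implicit Arguments. Unset Strict Implicit. Unset Printing Implicit Defensive.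
Import GRing.Theory.
Local Open Scope ring_scope.

(* Truncate the deformation to s_i = tau_i for i <= n and s_i = 0 beyond, put
   O(B,C)(x,y) = [B x, C y] - B (rho (C x) y - rho (C y) x) and
   E_m = sum_{b+c=m} O(s_b, s_c).  The deformation equations say E_m = 0 for
   m <= n, and E_{n+1} = Ob since its two terms involving s_{n+1} = 0 vanish.
   Let d_A be the coboundary formula of d_{\bar rho} on 2-cochains with T
   replaced by an arbitrary linear A.  For every family s and every N,
   sum_{a+b+c=N} d_{s_a} O(s_b, s_c) = 0: expanding d_A O(B,C) by bilinearity
   and the representation property, all terms but a Jacobi combination group
   into differences X(A,B,C) - X(sigma(A,B,C)) for permutations sigma, and
   these cancel in a sum that is symmetric in (a,b,c).  For N = n + 1 only the
   term a = 0 survives, and it is d_T Ob. *)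

(* The tactic [zmodule] proves identities between Z-linear combinations of
   atoms in a zmodType by reifying both sides over a common list of atoms and
   comparing the coefficients of each atom. *)
Inductive zexpr := ZAtom of nat | ZZero | ZAdd of zexpr & zexpr | ZOpp of zexpr.

Fixpoint zeval (G : zmodType) (atoms : seq G) (e : zexpr) : G :=
  match e with
  | ZAtom i => atoms`_i
  | ZZero => 0
  | ZAdd e1 e2 => zeval atoms e1 + zeval atoms e2
  | ZOpp e1 => - zeval atoms e1
  end.

Fixpoint zcoef (e : zexpr) (j : nat) : int :=
  match e with
  | ZAtom i => (i == j)%:Z
  | ZZero => 0
  | ZAdd e1 e2 => zcoef e1 j + zcoef e2 j
  | ZOpp e1 => - zcoef e1 j
  end.

Lemma zeval_coef (G : zmodType) (atoms : seq G) e :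
  zeval atoms e = \sum_(j < size atoms) atoms`_j *~ zcoef e j.
Proof.
elim: e => [i||e1 IH1 e2 IH2|e1 IH1] /=.
- rewrite (bigID (fun j : 'I_ _ => i == j)) /= [X in _ + X]big1 ?addr0; last first.
    by move=> j /negbTE ->; rewrite mulr0z.
  case: (ltnP i (size atoms)) => [lti | lei].
    by rewrite (big_pred1 (Ordinal lti)) ?eqxx // => j; rewrite eq_sym.
  rewrite nth_default // big_pred0 // => j.
  by apply/negbTE/eqP => eq_ij; move: (ltn_ord j); rewrite -eq_ij ltnNge lei.
- by rewrite big1 // => j _; rewrite mulr0z.
- by rewrite IH1 IH2 -big_split; apply: eq_bigr => j _; rewrite mulrzDr.
- by rewrite IH1 -sumrN; apply: eq_bigr => j _; rewrite mulrNz.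
Qed.

Lemma zeval_eq (G : zmodType) (atoms : seq G) e1 e2 :
  all (fun j => zcoef e1 j == zcoef e2 j) (iota 0 (size atoms)) ->
  zeval atoms e1 = zeval atoms e2.
Proof.
move=> /allP eq_coef; rewrite !zeval_coef; apply: eq_bigr => j _.
by rewrite (eqP (eq_coef j _)) // mem_iota ltn_ord.
Qed.

(* Atoms are identified up to conversion: rewriting with [linearB A] yields
   applications of A through a coercion path that differs syntactically. *)
Ltac zatoms_mem atoms t :=
  lazymatch atoms with
  | nil => constr:(false)
  | cons ?x ?rest =>
      match constr:(tt) with
      | _ => let _ := constr:(erefl x : x = t) in constr:(true)
      | _ => zatoms_mem rest t
      end
  end.

Ltac zatoms atoms t :=
  lazymatch t with
  | (?a + ?b)%R => let atoms := zatoms atoms a in zatoms atoms b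
  | (- ?a)%R => zatoms atoms a
  | 0%R => atoms
  | _ => lazymatch zatoms_mem atoms t with
         | true => atoms
         | false => constr:(cons t atoms)
         end
  end.

Ltac zatom_index atoms t :=
  lazymatch atoms with
  | cons ?x ?rest =>
      match constr:(tt) with
      | _ => let _ := constr:(erefl x : x = t) in constr:(0%N)
      | _ => let k := zatom_index rest t in constr:(S k)
      end
  end.

Ltac zreify atoms t :=
  lazymatch t with
  | (?a + ?b)%R =>
      let ea := zreify atoms a in let eb := zreify atoms b in constr:(ZAdd ea eb)
  | (- ?a)%R => let ea := zreify atoms a in constr:(ZOpp ea)
  | 0%R => constr:(ZZero)
  | _ => let k := zatom_index atoms t in constr:(ZAtom k)
  end.

Ltac zmodule :=
  lazymatch goal with |- @eq ?G ?lhs ?rhs =>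
    let atoms := zatoms (@nil G) lhs in
    let atoms := zatoms atoms rhs in
    let el := zreify atoms lhs in
    let er := zreify atoms rhs in
    change (zeval atoms el = zeval atoms er); apply: zeval_eq; vm_compute;
    reflexivity
  end.

Section SumTriples.
Variables (G : zmodType) (N : nat).

Definition sum_triples (X : nat -> nat -> nat -> G) : G :=
  \sum_(a < N.+1) \sum_(b < N.+1) \sum_(c < N.+1)
    (if (a + b + c == N)%N then X a b c else 0).

Lemma eq_sum_triples X Y :
  (forall a b c, X a b c = Y a b c) -> sum_triples X = sum_triples Y.
Proof.
move=> eqXY; do 3![apply: eq_bigr => ? _]; by rewrite eqXY.
Qed.

Lemma sum_triplesD X Y :
  sum_triples (fun a b c => X a b c + Y a b c) = sum_triples X + sum_triples Y.
Proof.
rewrite -big_split; apply: eq_bigr => a _; rewrite -big_split.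
apply: eq_bigr => b _; rewrite -big_split; apply: eq_bigr => c _ /=.
by case: ifP; rewrite ?addr0.
Qed.

Lemma sum_triplesB X Y :
  sum_triples (fun a b c => X a b c - Y a b c) = sum_triples X - sum_triples Y.
Proof.
rewrite -sumrB; apply: eq_bigr => a _; rewrite -sumrB.
apply: eq_bigr => b _; rewrite -sumrB; apply: eq_bigr => c _.
by case: ifP; rewrite ?subr0.
Qed.

Lemma sum_triples12 X : sum_triples (fun a b c => X b a c) = sum_triples X.
Proof.
rewrite /sum_triples exchange_big; do 3![apply: eq_bigr => ? _].
by rewrite (addnC (nat_of_ord _)).
Qed.

Lemma sum_triples23 X : sum_triples (fun a b c => X a c b) = sum_triples X.
Proof.
apply: eq_bigr => a _; rewrite exchange_big; do 2![apply: eq_bigr => ? _].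
by rewrite addnAC.
Qed.

Lemma sum_triples_antisym X Y Z :
  sum_triples (fun a b c =>
    (X a b c - X b a c) + (Y a b c - Y c b a) + (Z a b c - Z b c a)) = 0.
Proof.
rewrite 2!sum_triplesD !sum_triplesB (sum_triples12 X).
rewrite (sum_triples12 (fun a b c => Y c a b)) (sum_triples23 (fun a b c => Y b a c)).
rewrite (sum_triples12 Y) (sum_triples12 (fun a b c => Z a c b)) (sum_triples23 Z).
by rewrite !subrr !addr0.
Qed.

Lemma sum_triplesE X :
  sum_triples X = \sum_(a < N.+1) \sum_(b < (N - a).+1) X a b (N - a - b)%N.
Proof.
apply: eq_bigr => a _; have lt_aN := ltn_ord a.
transitivity (\sum_(b < N.+1) if (b <= N - a)%N then X a b (N - a - b)%N else 0).
  apply: eq_bigr => b _; case: (leqP b (N - a)) => [le_b | lt_b]; last first.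
    by rewrite big1 // => c _; case: eqP => //; lia.
  have lt_c : (N - a - b < N.+1)%N by lia.
  rewrite (bigD1 (Ordinal lt_c)) //= ifT; last by apply/eqP; lia.
  rewrite big1 ?addr0 // => c /eqP ne_c; case: eqP => // sum_abc.
  by case: ne_c; apply: val_inj => /=; lia.
by rewrite -big_mkcond (big_ord_widen N.+1 (fun b => X a b (N - a - b)%N))
  ?ltnS ?leq_subr.
Qed.

End SumTriples.

Section Coboundary.
Variables (K : fieldType) (g V : lmodType K).
Variables (br : g -> g -> g) (rho : g -> V -> V).

Definition Odefect (B C : {linear V -> g}) (x y : V) : g :=
  br (B x) (C y) - B (bracketT rho C x y).

Definition Odefect_sum (s : nat -> {linear V -> g}) (m : nat) (x y : V) : g :=
  \sum_(b < m.+1) Odefect (s b) (s (m - b)%N) x y.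

Definition coboundary2 (A : {linear V -> g}) (f : V -> V -> g) (u v w : V) : g :=
  br (A u) (f v w) - br (A v) (f u w) + br (A w) (f u v)
  + A (rho (f v w) u) - A (rho (f u w) v) + A (rho (f u v) w)
  - f (bracketT rho A u v) w + f (bracketT rho A u w) v
  - f (bracketT rho A v w) u.

Lemma eq_coboundary2 (A A' : {linear V -> g}) (f f' : V -> V -> g) u v w :
  A =1 A' -> f =2 f' ->
  coboundary2 A f u v w = coboundary2 A' f' u v w.
Proof. by move=> eqA eqf; rewrite /coboundary2 /bracketT !eqA !eqf. Qed.

Lemma dbar_coboundary2 (T : {linear V -> g}) (f : V -> V -> g) (u : 'I_3 -> V) :
  dbar br rho T (fun u : 'I_2 -> V => f (u ord0) (u ord_max)) u
  = coboundary2 T f (u ord0) (u (inord 1)) (u ord_max).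
Proof.
have unlift0 : unlift (ord0 : 'I_2) ord0 = None by rewrite unlift_none.
have unlift1 : unlift (ord0 : 'I_2) ord_max = Some ord0.
  by rewrite (_ : ord_max = lift ord0 ord0) ?liftK //; apply/val_inj.
rewrite /dbar unlift0 unlift1.
under [X in _ + _ + X]eq_bigr => i _ do rewrite big_mkcond.
rewrite !big_ord_recl !big_ord0 /=.
set w := [:: u ord0; u (inord 1); u ord_max].
have uw (i : 'I_3) : u i = w`_i.
  by case: i => -[|[|[|//]]] lti; rewrite /w /=; congr u;
    apply/val_inj; rewrite /= ?inordK.
rewrite !uw /= !inordK //= /w /= /bump /= !add0n !expr0 !expr1 sqrrN expr1n.
rewrite exprS sqrrN expr1n mulr1 !scale1r !scaleN1r.
by rewrite /coboundary2; zmodule.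
Qed.

Definition truncate (n : nat) (tau : nat -> {linear V -> g}) (i : nat)
    : {linear V -> g} :=
  if (i <= n)%N then tau i else \0.

Lemma Odefect_sum_truncate n tau m : (m <= n)%N ->
  Odefect_sum (truncate n tau) m =2 Odefect_sum tau m.
Proof.
move=> le_mn x y; apply: eq_bigr => b _; have lt_bm := ltn_ord b.
have le_bn : (b <= n)%N by lia.
have le_mbn : (m - b <= n)%N by lia.
by rewrite /truncate le_bn le_mbn.
Qed.

Hypothesis lie_br : is_lie_bracket br.
Hypothesis rep_rho : is_representation br rho.

Lemma brDl x y z : br (x + y) z = br x z + br y z.
Proof. by have [lin _ _ _] := lie_br; rewrite -[x]scale1r lin !scale1r. Qed.

Lemma brDr x y z : br z (x + y) = br z x + br z y.
Proof. by have [_ lin _ _] := lie_br; rewrite -[x]scale1r lin !scale1r. Qed.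

Lemma brBl x y z : br (x - y) z = br x z - br y z.
Proof. by have [lin _ _ _] := lie_br; rewrite addrC -scaleN1r lin scaleN1r addrC. Qed.

Lemma brBr x y z : br z (x - y) = br z x - br z y.
Proof. by have [_ lin _ _] := lie_br; rewrite addrC -scaleN1r lin scaleN1r addrC. Qed.

Lemma br0l z : br 0 z = 0.
Proof. by rewrite -[X in br X z](subrr 0) brBl subrr. Qed.

Lemma br0r z : br z 0 = 0.
Proof. by rewrite -[X in br z X](subrr 0) brBr subrr. Qed.

Lemma brNr x z : br z (- x) = - br z x.
Proof. by rewrite -sub0r brBr br0r sub0r. Qed.

Lemma brC x y : br x y = - br y x.
Proof.
have [_ _ alt _] := lie_br; apply/eqP; rewrite -addr_eq0 -(alt (x + y)).
by rewrite brDl !brDr !alt add0r addr0.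
Qed.

Lemma jacobi x y z : br x (br y z) + br y (br z x) + br z (br x y) = 0.
Proof. by have [] := lie_br. Qed.

Lemma rhoDl x y v : rho (x + y) v = rho x v + rho y v.
Proof. by have [lin _ _] := rep_rho; rewrite -[x]scale1r lin !scale1r. Qed.

Lemma rhoBl x y v : rho (x - y) v = rho x v - rho y v.
Proof. by have [lin _ _] := rep_rho; rewrite addrC -scaleN1r lin scaleN1r addrC. Qed.

Lemma rhoBr x u v : rho x (u - v) = rho x u - rho x v.
Proof. by have [_ lin _] := rep_rho; rewrite addrC -scaleN1r lin scaleN1r addrC. Qed.

Lemma rho0l v : rho 0 v = 0.
Proof. by rewrite -[X in rho X v](subrr 0) rhoBl subrr. Qed.

Lemma rho_br x y v : rho (br x y) v = rho x (rho y v) - rho y (rho x v).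
Proof. by have [] := rep_rho. Qed.

Lemma coboundary2_0 A u v w : coboundary2 A (fun _ _ => 0) u v w = 0.
Proof. by rewrite /coboundary2 /= !br0r !rho0l (linear0 A); zmodule. Qed.

Lemma coboundary2D A f f' u v w :
  coboundary2 A (fun x y => f x y + f' x y) u v w
  = coboundary2 A f u v w + coboundary2 A f' u v w.
Proof. by rewrite /coboundary2 /= !brDr !rhoDl !(linearD A); zmodule. Qed.

Lemma coboundary2_sum A (I : Type) (r : seq I) (F : I -> V -> V -> g) u v w :
  coboundary2 A (fun x y => \sum_(i <- r) F i x y) u v w
  = \sum_(i <- r) coboundary2 A (F i) u v w.
Proof.
elim: r => [|i r IH].
  rewrite big_nil -[RHS](coboundary2_0 A u v w).
  by apply: eq_coboundary2 => // x y; rewrite big_nil.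
rewrite big_cons -IH -coboundary2D.
by apply: eq_coboundary2 => // x y; rewrite big_cons.
Qed.

Section Parts.
Variables u v w : V.

Definition swap12_part (A B C : {linear V -> g}) : g :=
  - br (A v) (br (B u) (C w)) - A (rho (C w) (rho (B v) u))
  + A (rho (C w) (rho (B u) v)) - A (rho (C v) (rho (B u) w)).

Definition swap13_part (A B C : {linear V -> g}) : g :=
  - br (A u) (B (rho (C v) w)) + br (A u) (B (rho (C w) v))
  + br (A v) (B (rho (C u) w)) - br (A v) (B (rho (C w) u))
  - br (A w) (B (rho (C u) v)) + br (A w) (B (rho (C v) u)).

Definition cycle_part (A B C : {linear V -> g}) : g :=
  A (rho (B v) (rho (C w) u)) - A (rho (B u) (rho (C w) v))
  + A (rho (B u) (rho (C v) w))
  - A (rho (B (rho (C v) w)) u) + A (rho (B (rho (C w) v)) u)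
  + A (rho (B (rho (C u) w)) v) - A (rho (B (rho (C w) u)) v)
  - A (rho (B (rho (C u) v)) w) + A (rho (B (rho (C v) u)) w)
  - br (C w) (br (A u) (B v)).

Lemma coboundary2_Odefect A B C :
  coboundary2 A (Odefect B C) u v w
  = (swap12_part A B C - swap12_part B A C)
  + (swap13_part A B C - swap13_part C B A)
  + (cycle_part A B C - cycle_part B C A).
Proof.
have := jacobi (A u) (B v) (C w); rewrite (brC (C w) (A u)) brNr => jac.
rewrite /coboundary2 /Odefect /bracketT /swap12_part /swap13_part /cycle_part.
rewrite !(linearB A, linearB B, linearB C, brBl, brBr, rhoBl, rhoBr, rho_br).
rewrite ![br (B (rho _ _)) (C _)]brC.
by apply/eqP; rewrite -subr_eq0 -jac; apply/eqP; zmodule.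
Qed.

End Parts.

Lemma sum_triples_coboundary2_Odefect (s : nat -> {linear V -> g}) N u v w :
  sum_triples N (fun a b c => coboundary2 (s a) (Odefect (s b) (s c)) u v w) = 0.
Proof.
rewrite (eq_sum_triples N (fun a b c => coboundary2_Odefect u v w (s a) (s b) (s c))).
exact: sum_triples_antisym.
Qed.

Lemma sum_coboundary2_Odefect_sum (s : nat -> {linear V -> g}) N u v w :
  \sum_(a < N.+1) coboundary2 (s a) (Odefect_sum s (N - a)) u v w = 0.
Proof.
rewrite -[RHS](sum_triples_coboundary2_Odefect s N u v w) sum_triplesE.
by apply: eq_bigr => a _; rewrite coboundary2_sum.
Qed.

Lemma Ob_truncate n tau :
  Ob br rho n tau =2 Odefect_sum (truncate n tau) n.+1.
Proof.
move=> x y; rewrite /Odefect_sum big_ord_recl big_ord_recr /= subn0 subnn.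
have top z : truncate n tau n.+1 z = 0 by rewrite /truncate ltnn.
rewrite /Odefect /bracketT /bump /= add1n !top br0l br0r !rho0l subrr.
rewrite (linear0 (truncate n tau 0)) !subrr add0r addr0 /Ob big_add1 /= big_mkord.
apply: eq_bigr => i _; have lt_in := ltn_ord i.
have le_in : (1 + i <= n)%N by lia.
have le_ni : (n.+1 - (1 + i) <= n)%N by lia.
by rewrite /truncate le_in le_ni add1n.
Qed.

End Coboundary.

Theorem proposition5p13 (K : fieldType) (g V : lmodType K)
    (br : g -> g -> g) (rho : g -> V -> V) (T : {linear V -> g})
    (n : nat) (tau : nat -> {linear V -> g}) :
  is_lie_bracket br ->
  is_representation br rho ->
  is_O_operator br rho T ->
  is_order_deformation br rho T n tau ->
  forall u : 'I_3 -> V, dbar br rho T (Ob_cochain br rho n tau) u = 0.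
Proof.
(* The O-operator property of T is the case i = 0 of the deformation equations. *)
move=> lie_br rep_rho _ [tau0 deform] u.
pose s := truncate n tau.
rewrite /Ob_cochain dbar_coboundary2.
rewrite -[RHS](sum_coboundary2_Odefect_sum lie_br rep_rho s n.+1
                 (u ord0) (u (inord 1)) (u ord_max)).
rewrite big_ord_recl subn0 big1 ?addr0 => [|a _].
  apply: eq_coboundary2 => [x | x y]; first by rewrite /s /truncate tau0.
  exact: Ob_truncate.
rewrite -[RHS](coboundary2_0 lie_br rep_rho (s (lift ord0 a))
                 (u ord0) (u (inord 1)) (u ord_max)).
have le_an : (n.+1 - lift ord0 a <= n)%N by rewrite /= /bump add1n subSS leq_subr.
by apply: eq_coboundary2 => // x y; rewrite Odefect_sum_truncate //; apply: deform.
Qed.
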